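(* Let $t_0\in\mathbb R$ and let $g,h,y$ be non-negative locally integrable functions on $(t_0,\infty)$ such that $dy/dt$ is locally integrable on $(t_0,\infty)$ and $$\frac{dy}{dt}\le g(t)y(t)+h(t)\quad\forall t\ge t_0 .$$ Suppose there are $a_1,a_2,a_3\ge0$ with $\int_t^{t+1}g\,ds\le a_1$, $\int_t^{t+1}h\,ds\le a_2$, $\int_t^{t+1}y\,ds\le a_3$ for all $t\ge t_0$, and that for all $t>t_0$, $\int_{t_0}^t\big(g(s)y(s)+h(s)\big)ds\le P(t)$ for a non-negative function $P$. Then for all $t>t_0$, $$y(t)\le\Big(\frac{a_3}{t-t_0}+2a_2+a_3\Big)e^{a_1}+P(t).$$
   Context: The uniform Gronwall inequality (used as a known fact): under the first set of hypotheses with integrals over windows of length $r>0$ bounded by $a_1,a_2,a_3$, one has $y(t+r)\le(a_3/r+a_2)e^{a_1}$ for all $t\ge t_0$. *)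

From HB Require Import structures.
From mathcomp Require Import all_boot all_order all_algebra.
From mathcomp Require Import all_classical all_reals all_analysis.

(** Only the window bound on [y] matters.
    Since [dy <= g y + h] and [g y + h >= 0], for [t0 < s <= t] one gets
    [y t - y s <= \int_t0^t (g y + h) <= P t], so [y >= y t - P t] on [(t0, t]].
    Integrating this lower bound over the window [(max t0 (t - 1), t]] and
    comparing with [a3] gives [y t - P t <= a3 / (t - t0)] when [t <= t0 + 1]
    and [y t - P t <= a3] otherwise; both are dominated since [expR a1 >= 1]. *)
From HB Require Import structures.
From mathcomp Require Import all_boot all_order all_algebra.
From mathcomp Require Import all_classical all_reals all_analysis.
From mathcomp Require Import measurable_realfun lra.
Import Order.TTheory GRing.Theory Num.Theory.
Local Open Scope classical_set_scope.
Local Open Scope ring_scope.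

Section integral_comparison.
Context {d : measure_display} {T : measurableType d} {R : realType}.
Context (mu : {measure set T -> \bar R}) {D : set T} (mD : measurable D).
Local Open Scope ereal_scope.

(* No integrability is needed: the negative part of [f] only lowers its integral. *)
Lemma le_ge0_integral (f g : T -> \bar R) :
  measurable_fun D f -> measurable_fun D g ->
  (forall x, D x -> 0 <= g x) -> (forall x, D x -> f x <= g x) ->
  \int[mu]_(x in D) f x <= \int[mu]_(x in D) g x.
Proof.
move=> mf mg g0 fg; rewrite integralE.
apply: (@le_trans _ _ (\int[mu]_(x in D) f^\+ x)).
  rewrite -[leRHS]sube0 leeB// integral_ge0// => x _; exact: funeneg_ge0.
apply: ge0_le_integral => //.
- exact: measurable_funepos.
- by move=> x Dx; rewrite funeposE ge_max fg// g0.
Qed.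

Lemma cst_le_integral (c : R) (f : T -> \bar R) : measurable_fun D f ->
  (0 <= c)%R -> (forall x, D x -> c%:E <= f x) ->
  c%:E * mu D <= \int[mu]_(x in D) f x.
Proof.
move=> mf c0 cf; rewrite -integral_cst//.
by apply: ge0_le_integral => //; rewrite lee_fin.
Qed.

End integral_comparison.

Section half_line.
Context {R : realType} {t0 : R}.
Local Notation mu := (@lebesgue_measure R).

Lemma measurable_EFin_itv_half_line {f : R -> R} {i : interval R} :
  measurable_fun `]t0, +oo[ f -> [set` i] `<=` `]t0, +oo[ ->
  measurable_fun [set` i] (EFin \o f).
Proof.
by move=> mf sub; apply/measurable_EFinP; exact: measurable_funS mf.
Qed.

Lemma ge0_subset_integral_itv {f : R -> R} {a b c e : R} :
  measurable_fun `]t0, +oo[ f -> (forall x, t0 < x -> 0 <= f x) ->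
  t0 <= a -> a <= b -> c <= e ->
  (\int[mu]_(x in `]b, c]) (f x)%:E <= \int[mu]_(x in `[a, e]) (f x)%:E)%E.
Proof.
move=> mf f0 t0a ab ce.
have sub : `]a, e] `<=` `]t0, +oo[ by apply: subset_itv; rewrite bnd_simp.
rewrite -integral_itv_obnd_cbnd; last exact: measurable_EFin_itv_half_line.
apply: ge0_subset_integral => //; first exact: measurable_EFin_itv_half_line.
  by move=> x /sub /=; rewrite in_itv/= andbT => /f0; rewrite lee_fin.
by apply: subset_itv; rewrite bnd_simp.
Qed.

Lemma increment_le_integral_majorant {y dy f : R -> R} {s t : R} :
  measurable_fun `]t0, +oo[ dy -> measurable_fun `]t0, +oo[ f ->
  (forall x, t0 < x -> 0 <= f x) -> (forall x, t0 < x -> dy x <= f x) ->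
  (forall s t, t0 < s -> s <= t ->
     ((y t - y s)%:E = \int[mu]_(x in `[s, t]) (dy x)%:E)%E) ->
  t0 < s -> s <= t ->
  ((y t - y s)%:E <= \int[mu]_(x in `[t0, t]) (f x)%:E)%E.
Proof.
move=> mdy mf f0 dyf ftc t0s st.
have sub : `[s, t] `<=` `]t0, +oo[ by apply: subset_itv; rewrite bnd_simp.
have dy_le_f : (\int[mu]_(x in `[s, t]) (dy x)%:E
                 <= \int[mu]_(x in `[s, t]) (f x)%:E)%E.
  apply: le_ge0_integral => //; try exact: measurable_EFin_itv_half_line.
    by move=> x /sub /=; rewrite in_itv/= andbT => /f0; rewrite lee_fin.
  by move=> x /sub /=; rewrite in_itv/= andbT => /dyf; rewrite lee_fin.
rewrite ftc//; apply: (le_trans dy_le_f).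
have sub' : `]s, t] `<=` `]t0, +oo[.
  by apply: subset_itv; rewrite bnd_simp//; exact: ltW.
rewrite -(@integral_itv_obnd_cbnd _ s); last exact: measurable_EFin_itv_half_line.
exact: ge0_subset_integral_itv mf f0 (lexx t0) (ltW t0s) (lexx t).
Qed.

Lemma lower_bound_mul_length_le {y : R -> R} {a3 c u t : R} :
  measurable_fun `]t0, +oo[ y -> (forall x, t0 < x -> 0 <= y x) ->
  (forall t, t0 <= t ->
     (\int[mu]_(x in `[t, (t + 1)%R]) (y x)%:E <= a3%:E)%E) ->
  t0 <= u -> u < t -> t <= u + 1 -> 0 <= c ->
  (forall s, u < s -> s <= t -> c <= y s) ->
  c * (t - u) <= a3.
Proof.
move=> my y0 ya3 t0u ut tu1 c0 cy.
have sub : `]u, t] `<=` `]t0, +oo[ by apply: subset_itv; rewrite bnd_simp.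
rewrite -lee_fin EFinM.
have -> : (t - u)%:E = mu `]u, t] by rewrite lebesgue_measure_itv/= lte_fin ut -EFinB.
have c_le_y x : x \in `]u, t] -> (c%:E <= (y x)%:E)%E.
  by rewrite /= in_itv/= => /andP[ux xt]; rewrite lee_fin cy.
apply: le_trans (cst_le_integral mu (measurable_itv _) _ _
  (measurable_EFin_itv_half_line my sub) c0 c_le_y) _.
exact: le_trans (ge0_subset_integral_itv my y0 t0u (lexx u) tu1) (ya3 _ t0u).
Qed.

Lemma lower_bound_le_window {y : R -> R} {a3 c t : R} :
  measurable_fun `]t0, +oo[ y -> (forall x, t0 < x -> 0 <= y x) ->
  (forall t, t0 <= t ->
     (\int[mu]_(x in `[t, (t + 1)%R]) (y x)%:E <= a3%:E)%E) ->
  0 <= a3 -> t0 < t -> 0 <= c -> (forall s, t0 < s -> s <= t -> c <= y s) ->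
  c <= a3 / (t - t0) + a3.
Proof.
move=> my y0 ya3 a30 t0t c0 cy.
have Q0 : 0 <= a3 / (t - t0) by rewrite divr_ge0// subr_ge0 ltW.
have [tle|tgt] := leP t (t0 + 1).
  have := lower_bound_mul_length_le my y0 ya3 (lexx t0) t0t tle c0 cy.
  by rewrite -ler_pdivlMr ?subr_gt0//; lra.
have t0u : t0 <= t - 1 by lra.
have ut : t - 1 < t by lra.
have tu1 : t <= t - 1 + 1 by lra.
have := lower_bound_mul_length_le my y0 ya3 t0u ut tu1 c0
  (fun s us st => cy s (le_lt_trans t0u us) st).
have -> : t - (t - 1) = 1 by lra.
lra.
Qed.

End half_line.

Theorem mainTheorem18 (R : realType) (t0 : R) (g h y dy P : R -> R)
  (a1 a2 a3 : R) :
  locally_integrable `]t0, +oo[ g ->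
  locally_integrable `]t0, +oo[ h ->
  locally_integrable `]t0, +oo[ y ->
  (forall t, t0 < t -> 0 <= g t) ->
  (forall t, t0 < t -> 0 <= h t) ->
  (forall t, t0 < t -> 0 <= y t) ->
  locally_integrable `]t0, +oo[ dy ->
  (forall s t, t0 < s -> s <= t ->
     ((y t - y s)%:E = \int[lebesgue_measure]_(x in `[s, t]) (dy x)%:E)%E) ->
  (forall t, t0 < t -> dy t <= g t * y t + h t) ->
  0 <= a1 -> 0 <= a2 -> 0 <= a3 ->
  (forall t, t0 <= t ->
     (\int[lebesgue_measure]_(x in `[t, (t + 1)%R]) (g x)%:E <= a1%:E)%E) ->
  (forall t, t0 <= t ->
     (\int[lebesgue_measure]_(x in `[t, (t + 1)%R]) (h x)%:E <= a2%:E)%E) ->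
  (forall t, t0 <= t ->
     (\int[lebesgue_measure]_(x in `[t, (t + 1)%R]) (y x)%:E <= a3%:E)%E) ->
  (forall t, t0 < t -> 0 <= P t) ->
  (forall t, t0 < t ->
     (\int[lebesgue_measure]_(x in `[t0, t]) (g x * y x + h x)%:E
        <= (P t)%:E)%E) ->
  forall t, t0 < t ->
    y t <= (a3 / (t - t0) + 2 * a2 + a3) * expR a1 + P t.
Proof.
move=> [mg _ _] [mh _ _] [my _ _] g0 h0 y0 [mdy _ _] ftc dy_le a10 a20 a30
  _ _ ya3 _ intP t t0t.
have mf : measurable_fun `]t0, +oo[ (fun x => g x * y x + h x).
  by apply: measurable_funD => //; exact: measurable_funM.
have f0 x : t0 < x -> 0 <= g x * y x + h x.
  by move=> t0x; rewrite addr_ge0 ?mulr_ge0 ?g0 ?y0 ?h0.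
have y_ge s : t0 < s -> s <= t -> y t - P t <= y s.
  move=> t0s st; have := increment_le_integral_majorant mdy mf f0 dy_le ftc t0s st.
  by move/le_trans/(_ (intP t t0t)); rewrite lee_fin; lra.
have Q0 : 0 <= a3 / (t - t0) by rewrite divr_ge0// subr_ge0 ltW.
have yt_le : y t - P t <= a3 / (t - t0) + a3.
  have [|ytP] := leP (y t - P t) 0; first lra.
  exact: lower_bound_le_window my y0 ya3 a30 t0t (ltW ytP) y_ge.
have e1 : 1 <= expR a1 by apply: le_trans (expR_ge1Dx a1); lra.
have : a3 / (t - t0) + 2 * a2 + a3 <= (a3 / (t - t0) + 2 * a2 + a3) * expR a1.
  by rewrite ler_peMr//; lra.
lra.
Qed.
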